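(* Let $n\ge 1$, $d\ge 1$, let $k$ be an integer with $1\le k\le n$, let $\theta\in[0,1]$, let $\boldsymbol c\in\mathbb{R}^n$, and let $\boldsymbol E\in\mathbb{R}^{n\times d}$ have rows $\boldsymbol e_1,\dots,\boldsymbol e_n$ with $\|\boldsymbol e_i\|_2=1$ for all $i$. For $\lambda\in\mathbb{R}$ define $$f(\boldsymbol x)=\theta\,(k-1)\,\boldsymbol c^{\mathsf T}\boldsymbol x+(1-\theta)\,\boldsymbol x^{\mathsf T}(\lambda \boldsymbol I-\boldsymbol E\boldsymbol E^{\mathsf T})\boldsymbol x .$$ If $\lambda\ge 2$, then $$\max\{f(\boldsymbol x): \boldsymbol x\in\{0,1\}^n,\ \boldsymbol 1^{\mathsf T}\boldsymbol x=k\}=\max\{f(\boldsymbol x): \boldsymbol x\in[0,1]^n,\ \boldsymbol 1^{\mathsf T}\boldsymbol x=k\},$$ i.e. the relaxed problem has an integral (0/1) global maximizer, and every global maximizer of the binary problem is a global maximizer of the relaxed problem. Moreover, for every feasible $\boldsymbol x\in[0,1]^n$ with $\boldsymbol 1^{\mathsf T}\boldsymbol x=k$ there is an integral feasible $\boldsymbol x^\ast\in\{0,1\}^n$ with $\boldsymbol 1^{\mathsf T}\boldsymbol x^\ast=k$ and $f(\boldsymbol x^\ast)\ge f(\boldsymbol x)$.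
   Context: The binary problem is the cardinality-constrained binary quadratic program $\max f(\boldsymbol x)$ over $\boldsymbol x\in\{0,1\}^n$ with $\boldsymbol 1^{\mathsf T}\boldsymbol x=k$; the relaxed problem replaces $\{0,1\}^n$ by $[0,1]^n$. The relaxation is called tight if the two global maximum values coincide. Note that the diagonal entries of $\boldsymbol W=\boldsymbol E\boldsymbol E^{\mathsf T}$ equal $1$ and its off-diagonal entries $w_{ij}=\boldsymbol e_i^{\mathsf T}\boldsymbol e_j$ lie in $[-1,1]$. *)

From mathcomp Require Import all_boot all_order all_algebra.
Set Implicit Arguments. Unset Strict Implicit. Unset Printing Implicit Defensive.
Import Order.TTheory GRing.Theory Num.Theory.
Local Open Scope ring_scope.

Definition obj (R : realFieldType) (n d k : nat) (theta lambda : R)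
  (c : 'I_n -> R) (E : 'M[R]_(n, d)) (x : 'I_n -> R) : R :=
  theta * (k%:R - 1) * (\sum_i c i * x i)
  + (1 - theta) * (\sum_i \sum_j x i * ((if i == j then lambda else 0)
                                          - (E *m E^T) i j) * x j).

Definition relaxed_feasible (R : realFieldType) (n k : nat) (x : 'I_n -> R) : Prop :=
  (forall i, 0 <= x i <= 1) /\ \sum_i x i = k%:R.

Definition binary_feasible (R : realFieldType) (n k : nat) (x : 'I_n -> R) : Prop :=
  (forall i, x i = 0 \/ x i = 1) /\ \sum_i x i = k%:R.

(* Write [M = lambda I - E E^T]. Moving mass between two coordinates,
   [x + t (e_i - e_j)], changes [x^T M x] by a quadratic in [t] whose leading
   coefficient is [M_ii - M_ij - M_ji + M_jj = 2 lambda - 2 + 2 w_ij >= 2 lambda - 4],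
   so for [lambda >= 2] the objective is convex along every such segment and is
   dominated by one of the two ends of the feasible segment. Taking [i], [j]
   fractional (a feasible point never has exactly one fractional coordinate),
   either end makes one of them integral, so repeating this rounds any relaxed
   point to a binary one without decreasing [f]. Both equalities of maxima
   follow, the binary problem being a finite one. *)

From mathcomp Require Import all_boot all_order all_algebra.
From mathcomp Require Import ring lra.
From Stdlib Require Import FunctionalExtensionality.
Import Order.TTheory GRing.Theory Num.Theory.
Set Implicit Arguments. Unset Strict Implicit. Unset Printing Implicit Defensive.
Local Open Scope ring_scope.

Section QuadraticForms.

Variables (R : comPzRingType) (n : nat).
Implicit Types (x v c : 'I_n -> R) (M : 'I_n -> 'I_n -> R) (i j : 'I_n).

Definition shift x v (t : R) (a : 'I_n) : R := x a + t * v a.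

Definition quad_form M x : R := \sum_i \sum_j x i * M i j * x j.

Definition pair_dir i j (a : 'I_n) : R := (a == i)%:R - (a == j)%:R.

Lemma dot_shift c x v t :
  \sum_a c a * shift x v t a = \sum_a c a * x a + t * \sum_a c a * v a.
Proof.
rewrite mulr_sumr -big_split; apply: eq_bigr => a _.
by rewrite /shift mulrDr mulrCA.
Qed.

Lemma quad_form_shift M x v t :
  quad_form M (shift x v t) =
  quad_form M x + t * (\sum_i \sum_j (x i * M i j * v j + v i * M i j * x j))
  + t ^+ 2 * quad_form M v.
Proof.
rewrite /quad_form !mulr_sumr -!big_split; apply: eq_bigr => i _ /=.
rewrite !mulr_sumr -!big_split; apply: eq_bigr => j _ /=.
by rewrite /shift; ring.
Qed.

Lemma sum_mul_delta (F : 'I_n -> R) i : \sum_a F a * (a == i)%:R = F i.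
Proof.
rewrite (bigD1 i) //= eqxx mulr1 big1 ?addr0 // => a /negbTE ->.
by rewrite mulr0.
Qed.

Lemma sum_mul_pair_dir (F : 'I_n -> R) i j :
  \sum_a F a * pair_dir i j a = F i - F j.
Proof.
rewrite -!sum_mul_delta -sumrB; apply: eq_bigr => a _.
by rewrite /pair_dir mulrBr.
Qed.

Lemma sum_pair_dir i j : \sum_a pair_dir i j a = 0.
Proof.
rewrite -[RHS](subrr 1) -(sum_mul_pair_dir (fun=> 1) i j).
by apply: eq_bigr => a _; rewrite mul1r.
Qed.

Lemma quad_form_pair_dir M i j :
  quad_form M (pair_dir i j) = M i i - M i j - (M j i - M j j).
Proof.
rewrite /quad_form -(sum_mul_pair_dir (fun a => M a i - M a j)).
apply: eq_bigr => a _.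
by rewrite (sum_mul_pair_dir (fun b => pair_dir i j a * M a b)) -mulrBr mulrC.
Qed.

Lemma shift_pair_dir_l x i j t : i != j -> shift x (pair_dir i j) t i = x i + t.
Proof. by move=> ij; rewrite /shift /pair_dir eqxx (negbTE ij) subr0 mulr1. Qed.

Lemma shift_pair_dir_r x i j t : i != j -> shift x (pair_dir i j) t j = x j - t.
Proof.
by move=> ij; rewrite /shift /pair_dir eqxx eq_sym (negbTE ij) sub0r mulrN1.
Qed.

Lemma shift_pair_dir_other x i j t a :
  a != i -> a != j -> shift x (pair_dir i j) t a = x a.
Proof.
by move=> ai aj; rewrite /shift /pair_dir (negbTE ai) (negbTE aj) subr0 mulr0 addr0.
Qed.

End QuadraticForms.

Arguments pair_dir {R n} i j a.

Section EndpointDomination.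

Variables (R : realFieldType) (n : nat).

Definition endpoint_dominated (g : ('I_n -> R) -> R) :=
  forall x i j (s t : R), s <= 0 -> 0 <= t ->
  g x <= g (shift x (pair_dir i j) s) \/ g x <= g (shift x (pair_dir i j) t).

Lemma endpoint_dominated_convex_quadratic (g : ('I_n -> R) -> R) :
  (forall x i j, exists A B, 0 <= B /\
     forall t, g (shift x (pair_dir i j) t) = g x + t * A + t ^+ 2 * B) ->
  endpoint_dominated g.
Proof.
move=> gE x i j s t s_le0 t_ge0.
have [A [B [B_ge0 gxE]]] := gE x i j; rewrite !gxE.
have sqrB_ge0 u : 0 <= u ^+ 2 * B by rewrite mulr_ge0 ?sqr_ge0.
have [A_ge0|A_lt0] := leP 0 A; [right|left]; rewrite -addrA lerDl addr_ge0 //.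
  exact: mulr_ge0.
by rewrite mulr_le0 // ltW.
Qed.

End EndpointDomination.

Section Objective.

Variables (R : realFieldType) (n d k : nat) (theta lambda : R).
Variables (c : 'I_n -> R) (E : 'M[R]_(n, d)).
Hypothesis unit_rows : forall i : 'I_n, \sum_(l < d) E i l ^+ 2 = 1.
Hypothesis theta_le1 : theta <= 1.
Hypothesis lambda_ge2 : 2 <= lambda.

Lemma gramE i j : (E *m E^T) i j = \sum_l E i l * E j l.
Proof. by rewrite mxE; apply: eq_bigr => l _; rewrite mxE. Qed.

Lemma gram_sym i j : (E *m E^T) j i = (E *m E^T) i j.
Proof. by rewrite !gramE; apply: eq_bigr => l _; rewrite mulrC. Qed.

Lemma gram_diag i : (E *m E^T) i i = 1.
Proof. by rewrite gramE -(unit_rows i); apply: eq_bigr => l _; rewrite expr2. Qed.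

Lemma gram_ge_N1 i j : -1 <= (E *m E^T) i j.
Proof.
have : 0 <= \sum_l (E i l + E j l) ^+ 2 by apply: sumr_ge0 => l _; apply: sqr_ge0.
have -> : \sum_l (E i l + E j l) ^+ 2 =
    (E *m E^T) i i + (E *m E^T) j j + 2 * (E *m E^T) i j.
  rewrite !gramE mulr_sumr -!big_split /=.
  by apply: eq_bigr => l _; ring.
rewrite !gram_diag; lra.
Qed.

Definition obj_matrix (i j : 'I_n) : R :=
  (if i == j then lambda else 0) - (E *m E^T) i j.

Lemma objE x : obj k theta lambda c E x =
  theta * (k%:R - 1) * (\sum_a c a * x a) + (1 - theta) * quad_form obj_matrix x.
Proof. by []. Qed.

Lemma obj_shift x v : exists A, forall t,
  obj k theta lambda c E (shift x v t) =
  obj k theta lambda c E x + t * A + t ^+ 2 * ((1 - theta) * quad_form obj_matrix v).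
Proof.
exists (theta * (k%:R - 1) * (\sum_a c a * v a) + (1 - theta) *
  (\sum_i \sum_j (x i * obj_matrix i j * v j + v i * obj_matrix i j * x j))).
by move=> t; rewrite !objE dot_shift quad_form_shift; ring.
Qed.

Lemma obj_matrix_pair_curvature i j : 0 <= quad_form obj_matrix (pair_dir i j).
Proof.
rewrite quad_form_pair_dir /obj_matrix eqxx.
have [<-|ij] := eqVneq i j; first by rewrite eqxx !subrr.
rewrite eqxx !gram_diag (gram_sym i j).
have := gram_ge_N1 i j; have := lambda_ge2; lra.
Qed.

Lemma obj_endpoint_dominated : endpoint_dominated (obj k theta lambda c E).
Proof.
apply: endpoint_dominated_convex_quadratic => x i j.
have [A objA] := obj_shift x (pair_dir i j).
exists A, ((1 - theta) * quad_form obj_matrix (pair_dir i j)); split => //.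
by rewrite mulr_ge0 ?subr_ge0 ?obj_matrix_pair_curvature.
Qed.

End Objective.

Section Rounding.

Variables (R : realFieldType) (n k : nat).
Implicit Types (x : 'I_n -> R) (i j : 'I_n).

Definition frac x : {set 'I_n} := [set a | 0 < x a < 1].

Lemma unit_interval_notin_open (z : R) :
  0 <= z <= 1 -> ~~ (0 < z < 1) -> z = 0 \/ z = 1.
Proof.
case/andP=> z_ge0 z_le1; rewrite negb_and -!leNgt => /orP[z_le0|z_ge1].
  by left; apply: le_anti; rewrite z_le0.
by right; apply: le_anti; rewrite z_ge1 z_le1.
Qed.

Lemma notin_frac_binary x a : relaxed_feasible k x -> a \notin frac x ->
  x a = 0 \/ x a = 1.
Proof. by move=> [x01 _]; rewrite inE; apply: unit_interval_notin_open. Qed.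

Lemma binary_feasible_frac0 x : relaxed_feasible k x -> frac x = set0 ->
  binary_feasible k x.
Proof.
move=> xfeas frac0; split; last by case: xfeas.
by move=> a; apply: notin_frac_binary; rewrite ?frac0 ?inE.
Qed.

(* Otherwise the lone fractional coordinate would be [k] minus an integer. *)
Lemma frac_neq_set1 x i : relaxed_feasible k x -> frac x != [set i].
Proof.
move=> xfeas; apply/eqP => frac1; have [_ sumx] := xfeas.
have : i \in frac x by rewrite frac1 set11.
rewrite inE => /andP[xi_gt0 xi_lt1].
pose N := (\sum_(a | a != i) (x a == 1%R : nat))%N.
have sum_other : \sum_(a | a != i) x a = N%:R.
  rewrite natr_sum; apply: eq_bigr => a ai.
  have : a \notin frac x by rewrite frac1 in_set1.
  by case/(notin_frac_binary xfeas) => ->; rewrite ?eqxx // eq_sym oner_eq0.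
rewrite (bigD1 i) //= sum_other in sumx.
have [kN|Nk] := leqP k N.
  have : (k%:R : R) <= N%:R by rewrite ler_nat.
  rewrite -sumx; lra.
have : (N.+1%:R : R) <= k%:R by rewrite ler_nat.
rewrite -natr1 -sumx; lra.
Qed.

Lemma frac_pair x : relaxed_feasible k x -> frac x != set0 ->
  exists i j, [/\ i != j, i \in frac x & j \in frac x].
Proof.
move=> xfeas /set0Pn[i fi].
have [frac1|[j]] := set_0Vmem (frac x :\ i).
  by have := frac_neq_set1 i xfeas; rewrite -(setD1K fi) frac1 setU0 eqxx.
by rewrite !inE => /andP[ji fj]; exists i, j; rewrite eq_sym ji fi inE.
Qed.

Definition pair_exit (a b u : R) :=
  [/\ 0 <= a + u <= 1, 0 <= b - u <= 1 & ~~ (0 < a + u < 1) || ~~ (0 < b - u < 1)].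

Lemma pair_exit_both_sides (a b : R) : 0 < a < 1 -> 0 < b < 1 ->
  exists s t, [/\ s <= 0, 0 <= t, pair_exit a b s & pair_exit a b t].
Proof.
move=> /andP[a_gt0 a_lt1] /andP[b_gt0 b_lt1].
have [s [s_le0 exit_s]] : exists s, s <= 0 /\ pair_exit a b s.
  have [ab|ba] := leP a (1 - b).
    exists (- a); split; first lra.
    by split; rewrite ?subrr ?ltxx //; apply/andP; split; lra.
  exists (b - 1); split; first lra.
  by split; rewrite ?subKr ?ltxx ?andbF ?orbT //; apply/andP; split; lra.
have [t [t_ge0 exit_t]] : exists t, 0 <= t /\ pair_exit a b t.
  have [ab|ba] := leP (1 - a) b.
    exists (1 - a); split; first lra.
    by split; rewrite ?subrKC ?ltxx ?andbF //; apply/andP; split; lra.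
  exists b; split; first lra.
  by split; rewrite ?subrr ?ltxx ?orbT //; apply/andP; split; lra.
by exists s, t.
Qed.

Lemma pair_shift_progress x i j u :
  relaxed_feasible k x -> i != j -> i \in frac x -> j \in frac x ->
  pair_exit (x i) (x j) u ->
  relaxed_feasible k (shift x (pair_dir i j) u) /\
  (#|frac (shift x (pair_dir i j) u)| < #|frac x|)%N.
Proof.
move=> [x01 sumx] ij fi fj [yi01 yj01 exit_ij].
set y := shift x (pair_dir i j) u.
have yi : y i = x i + u by rewrite /y shift_pair_dir_l.
have yj : y j = x j - u by rewrite /y shift_pair_dir_r.
have yo a : a != i -> a != j -> y a = x a by apply: shift_pair_dir_other.
split; first split.
- move=> a; have [->|ai] := eqVneq a i; first by rewrite yi.
  have [->|aj] := eqVneq a j; first by rewrite yj.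
  by rewrite yo.
- by rewrite /y /shift big_split /= -mulr_sumr sum_pair_dir mulr0 addr0.
apply/proper_card/properP; split.
  apply/subsetP => a; have [->|ai] := eqVneq a i; first by [].
  have [->|aj] := eqVneq a j; first by [].
  by rewrite !inE yo.
by case/orP: exit_ij => ?; [exists i | exists j]; rewrite // inE ?yi ?yj.
Qed.

Variable g : ('I_n -> R) -> R.
Hypothesis g_dominated : endpoint_dominated g.

Lemma round_step x : relaxed_feasible k x -> frac x != set0 ->
  exists y, [/\ relaxed_feasible k y, g x <= g y & (#|frac y| < #|frac x|)%N].
Proof.
move=> xfeas /(frac_pair xfeas)[i [j [ij fi fj]]].
have [xi01 xj01] : 0 < x i < 1 /\ 0 < x j < 1 by move: fi fj; rewrite !inE.
have [s [t [s_le0 t_ge0 exit_s exit_t]]] := pair_exit_both_sides xi01 xj01.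
have progress := pair_shift_progress xfeas ij fi fj.
have [gs|gt] := g_dominated x i j s_le0 t_ge0.
  by exists (shift x (pair_dir i j) s); have [] := progress _ exit_s.
by exists (shift x (pair_dir i j) t); have [] := progress _ exit_t.
Qed.

Lemma round_to_binary x : relaxed_feasible k x ->
  exists xs, binary_feasible k xs /\ g x <= g xs.
Proof.
move: {2}#|frac x| (leqnn #|frac x|) => m; elim: m x => [|m IH] x frac_le xfeas.
  exists x; split => //; apply: binary_feasible_frac0 => //.
  by apply/eqP; rewrite -cards_eq0 -leqn0.
have [frac0|frac_ne0] := eqVneq (frac x) set0.
  by exists x; split => //; apply: binary_feasible_frac0.
have [y [yfeas gxy lt_frac]] := round_step xfeas frac_ne0.
have [xs [xsbin gyxs]] := IH y (leq_trans lt_frac frac_le) yfeas.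
by exists xs; split => //; apply: le_trans gyxs.
Qed.

End Rounding.

Section BinaryPoints.

Variables (R : realFieldType) (n k : nat).
Implicit Types S : {set 'I_n}.

Definition indicator S (a : 'I_n) : R := (a \in S)%:R.

Lemma sum_indicator S : \sum_a indicator S a = #|S|%:R.
Proof.
rewrite -sum1_card natr_sum [RHS]big_mkcond /=; apply: eq_bigr => a _.
by rewrite /indicator; case: (a \in S).
Qed.

Lemma binary_feasible_indicator S : #|S| = k -> binary_feasible k (indicator S).
Proof.
move=> cardS; split; last by rewrite sum_indicator cardS.
by move=> a; rewrite /indicator; case: (a \in S); [right | left].
Qed.

Lemma binary_feasibleP (x : 'I_n -> R) :
  binary_feasible k x -> exists2 S : {set 'I_n}, #|S| = k & x = indicator S.
Proof.
move=> [x01 sumx]; set S := [set a | x a == 1].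
have xE : x = indicator S.
  apply: functional_extensionality => a; rewrite /indicator inE.
  by case: (x01 a) => ->; rewrite ?eqxx // eq_sym oner_eq0.
by exists S => //; apply/eqP; rewrite -(eqr_nat R) -sum_indicator -xE sumx.
Qed.

Lemma binary_argmax (g : ('I_n -> R) -> R) : (k <= n)%N ->
  exists xs, binary_feasible k xs /\
    forall y, binary_feasible k y -> g y <= g xs.
Proof.
move=> kn; pose S0 := [set widen_ord kn a | a : 'I_k].
have cardS0 : #|S0| == k.
  by rewrite /S0 card_imset ?card_ord // => a b [] /val_inj.
have [S /eqP cardS Smax] :=
  arg_maxP (fun S => g (indicator S)) (P := fun S => #|S| == k) cardS0.
exists (indicator S); split; first exact: binary_feasible_indicator.
by move=> _ /binary_feasibleP[T /eqP cardT ->]; apply: Smax.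
Qed.

End BinaryPoints.

Theorem theorem1 (R : realFieldType) (n d k : nat) (theta lambda : R)
  (c : 'I_n -> R) (E : 'M[R]_(n, d)) :
  (1 <= n)%N -> (1 <= d)%N -> (1 <= k <= n)%N ->
  0 <= theta <= 1 ->
  (forall i : 'I_n, \sum_(l < d) E i l ^+ 2 = 1) ->
  2 <= lambda ->
  let f := @obj R n d k theta lambda c E in
  (exists xs : 'I_n -> R, @binary_feasible R n k xs /\
     forall y, @relaxed_feasible R n k y -> f y <= f xs) /\
  (forall xb : 'I_n -> R, @binary_feasible R n k xb ->
     (forall y, @binary_feasible R n k y -> f y <= f xb) ->
     forall y, @relaxed_feasible R n k y -> f y <= f xb) /\
  (forall x : 'I_n -> R, @relaxed_feasible R n k x ->
     exists xs : 'I_n -> R, @binary_feasible R n k xs /\ f x <= f xs).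
Proof.
move=> _ _ /andP[_ kn] /andP[_ theta_le1] unit_rows lambda_ge2 f.
have round x : relaxed_feasible k x -> exists xs, binary_feasible k xs /\ f x <= f xs.
  by apply: round_to_binary; apply: obj_endpoint_dominated.
have relaxed_le xb : (forall y, binary_feasible k y -> f y <= f xb) ->
    forall y, relaxed_feasible k y -> f y <= f xb.
  by move=> xb_max y /round[ys [ysbin fy]]; apply: le_trans fy (xb_max _ ysbin).
split; [|split] => // [|xb _]; last exact: relaxed_le.
have [xs [xsbin xs_max]] := binary_argmax f kn.
by exists xs; split => //; apply: relaxed_le.
Qed.
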